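(* Let $\sigma\in\{\textsf{Sup},\textsf{KK},\textsf{PSt},\textsf{St},\textsf{WF}\}$ and let $\mathcal T$ be a permaconsistent distributed theory. Then $\mathcal T$ is universally consistent under $\sigma$, i.e. every $\sigma$-model of $\mathcal T$ is universally consistent.
   Context: Standing setup (dAEL). $\Sigma=\Sigma_o\uplus\Sigma_s$ is a first-order vocabulary (objective and subjective symbols). A nonempty domain $D$ and a $\Sigma_o$-structure $I_o$ with domain $D$ are fixed, as is a set of agents $\mathcal{A}\subseteq D$. For each $A\in\mathcal{A}$ there is a constant $A\in\Sigma_o$ with $A^{I_o}=A$, and $\Sigma_o$ contains a unary predicate $\mathrm{Apred}$ with $\mathrm{Apred}^{I_o}=\mathcal{A}$. ''Structure'' means a $\Sigma$-structure with domain $D$ that agrees with $I_o$ on $\Sigma_o$. Formulas of dAEL are built from atoms $P(\bar t)$ ($P\in\Sigma$ or equality) using $\wedge,\neg,\forall x$, and the modal rule: if $\varphi$ is a formula and $t$ a term then $K_t\varphi$ is a formula ($\vee,\Rightarrow,\Leftrightarrow,\exists$ are the usual abbreviations). Truth values are $\mathbf t,\mathbf f,\mathbf u$ with truth order $\mathbf f<_t\mathbf u<_t\mathbf t$; $\mathbf t^{-1}=\mathbf f$, $\mathbf f^{-1}=\mathbf t$, $\mathbf u^{-1}=\mathbf u$. A possible world structure (PWS) is a set of structures; $Q_1\le_K Q_2$ iff $Q_2\subseteq Q_1$; $\bot$ denotes the set of all structures and $\top=\emptyset$. A distributed possible world structure (DPWS) is a family $\mathcal Q=(\mathcal Q_A)_{A\in\mathcal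 A}$ of PWSs, ordered pointwise by $\le_K$. A distributed belief pair (DBP) is a pair $\mathcal B=(\mathcal B^c,\mathcal B^l)$ of DPWSs; $(\mathcal P,\mathcal S)\le_p(\mathcal P',\mathcal S')$ iff $\mathcal P\le_K\mathcal P'$ and $\mathcal S'\le_K\mathcal S$. A DBP is consistent if $\mathcal B^c\le_K\mathcal B^l$ (i.e. $\mathcal B^l_A\subseteq\mathcal B^c_A$ for all $A$); DBPs are tacitly assumed consistent unless said otherwise, and a DPWS $\mathcal Q$ is identified with the exact DBP $(\mathcal Q,\mathcal Q)$. Two-valued value $\varphi^{\mathcal Q,I,a}$ (DPWS $\mathcal Q$, structure $I$, variable assignment $a$): standard first-order clauses for atoms, $\neg,\wedge,\forall$, and $(K_t\varphi)^{\mathcal Q,I,a}=\mathbf t$ iff $t^{I,a}\in\mathcal A$ and $\varphi^{\mathcal Q,J,a}=\mathbf t$ for every $J\in\mathcal Q_{t^{I,a}}$, otherwise $\mathbf f$. Three-valued value $\varphi^{\mathcal B,I,a}$ for any pair $\mathcal B$ of DPWSs: atoms get their two-valued value in $I$; $\neg$ is interpreted by ${}^{-1}$, and $\wedge$, $\forall$ by $\le_t$-greatest lower bound (Kleene); $(K_t\varphi)^{\mathcal B,I,a}$ is $\mathbf t$ if $t^{I,a}\in\mathcal A$ and $\varphi^{\mathcal B,J,a}=\mathbf t$ for all $J\in\mathcal B^c_{t^{I,a}}$; it is $\mathbf f$ if $t^{I,a}\notin\mathcal A$ or $\varphi^{\mathcal B,J,a}=\mathbf f$ for some $J\in\mathcal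 B^l_{t^{I,a}}$; and $\mathbf u$ otherwise. For sentences the assignment is omitted, and the value of a set of sentences is the $\le_t$-glb of the values of its members. A distributed theory is a family $\mathcal T=(\mathcal T_A)_{A\in\mathcal A}$ of sets of dAEL sentences. Operators: $D_{\mathcal T}(\mathcal Q)=(\{I:\mathcal T_A^{\mathcal Q,I}=\mathbf t\})_{A\in\mathcal A}$; $D^*_{\mathcal T}(\mathcal B)=(D^c_{\mathcal T}(\mathcal B),D^l_{\mathcal T}(\mathcal B))$ with $D^c_{\mathcal T}(\mathcal B)_A=\{I:\mathcal T_A^{\mathcal B,I}\ne\mathbf f\}$ and $D^l_{\mathcal T}(\mathcal B)_A=\{I:\mathcal T_A^{\mathcal B,I}=\mathbf t\}$; the stable operator $S_{\mathcal T}(\mathcal Q)$ is the $\le_K$-least fixpoint of $\mathcal Q'\mapsto D^c_{\mathcal T}((\mathcal Q',\mathcal Q))$. Models of $\mathcal T$ (w.r.t. $I_o$): a Sup-model is a DPWS fixpoint of $D_{\mathcal T}$; the KK-model is the $\le_p$-least fixpoint of $D^*_{\mathcal T}$; a PSt-model is a DBP $\mathcal B$ with $\mathcal B^c=S_{\mathcal T}(\mathcal B^l)$ and $\mathcal B^l=S_{\mathcal T}(\mathcal B^c)$; an St-model is a DPWS $\mathcal Q$ such that $(\mathcal Q,\mathcal Q)$ is a PSt-model; the WF-model is the $\le_p$-least PSt-model. Universal consistency: a DPWS $\mathcal Q$ is universally consistent if $\mathcal Q_A\neq\emptyset$ for all $A\in\mathcal A$; a DBP $\mathcal B$ is universally consistent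 if $\mathcal B^l$ is. Permaconsistency: $\mathcal T$ is permaconsistent if for each $A\in\mathcal A$ and each theory $T'$ obtained from $\mathcal T_A$ by replacing each occurrence of a subformula $K_t\varphi$ that is not nested under a modal operator by $\mathbf t$ or by $\mathbf f$ (independently per occurrence), $T'$ has a model that is a structure (i.e. expands $I_o$). *)

From Stdlib Require Import Classical ClassicalEpsilon.
From Stdlib Require Fin.
Set Implicit Arguments.

(* A first-order vocabulary Sigma = Sigma_o (+) Sigma_s: every symbol is
   flagged objective (true) or subjective (false). *)
Record vocab := Vocab {
  fsym : Type; psym : Type;
  farity : fsym -> nat; parity : psym -> nat;
  fobj : fsym -> bool; pobj : psym -> bool }.

Section Syntax.
Context (S : vocab).

Inductive term : Type :=
| Var : nat -> term
| App : forall f : fsym S, (Fin.t (farity S f) -> term) -> term.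

Inductive formula : Type :=
| Atom : forall p : psym S, (Fin.t (parity S p) -> term) -> formula
| Eq : term -> term -> formula
| Neg : formula -> formula
| And : formula -> formula -> formula
| Forall : nat -> formula -> formula
| Know : term -> formula -> formula.

Fixpoint free_in_term (x : nat) (t : term) : Prop :=
  match t with
  | Var y => x = y
  | App f args => exists i, free_in_term x (args i)
  end.

Fixpoint free_in (x : nat) (phi : formula) : Prop :=
  match phi with
  | Atom p args => exists i, free_in_term x (args i)
  | Eq t1 t2 => free_in_term x t1 \/ free_in_term x t2
  | Neg p => free_in x p
  | And p q => free_in x p \/ free_in x q
  | Forall y p => x <> y /\ free_in x p
  | Know t p => free_in_term x t \/ free_in x p
  end.

Definition sentence (phi : formula) : Prop := forall x, ~ free_in x phi.

(* Objective formulas extended with truth constants: the result of replacing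
   non-nested modal subformulas by t or f. *)
Inductive oformula : Type :=
| OTop : oformula
| OBot : oformula
| OAtom : forall p : psym S, (Fin.t (parity S p) -> term) -> oformula
| OEq : term -> term -> oformula
| ONeg : oformula -> oformula
| OAnd : oformula -> oformula -> oformula
| OForall : nat -> oformula -> oformula.

Inductive repl : formula -> oformula -> Prop :=
| repl_atom p args : repl (Atom p args) (OAtom p args)
| repl_eq t1 t2 : repl (Eq t1 t2) (OEq t1 t2)
| repl_neg p q : repl p q -> repl (Neg p) (ONeg q)
| repl_and p1 p2 q1 q2 : repl p1 q1 -> repl p2 q2 -> repl (And p1 p2) (OAnd q1 q2)
| repl_forall x p q : repl p q -> repl (Forall x p) (OForall x q)
| repl_know_t t p : repl (Know t p) OTop
| repl_know_f t p : repl (Know t p) OBot.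

End Syntax.

Arguments Var {S}.
Arguments OTop {S}.
Arguments OBot {S}.

Record structure (S : vocab) (D : Type) := Struct {
  finterp : forall f : fsym S, (Fin.t (farity S f) -> D) -> D;
  pinterp : forall p : psym S, (Fin.t (parity S p) -> D) -> Prop }.

Section Semantics.
Context (S : vocab) (D : Type).

Fixpoint teval (I : structure S D) (a : nat -> D) (t : term S) : D :=
  match t with
  | Var x => a x
  | App f args => finterp I f (fun i => teval I a (args i))
  end.

Definition upd (a : nat -> D) (x : nat) (d : D) : nat -> D :=
  fun y => if Nat.eqb y x then d else a y.

Context (Io : structure S D) (Ag : D -> Prop).

Definition agrees (I : structure S D) : Prop :=
  (forall f, fobj S f = true -> forall v, finterp I f v = finterp Io f v) /\
  (forall p, pobj S p = true -> forall v, pinterp I p v <-> pinterp Io p v).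

(* "structure" in the paper's sense *)
Definition Str := { I : structure S D | agrees I }.
Definition PWS := Str -> Prop.
(* distributed PWS: only the components at agents A (Ag A) are meaningful *)
Definition DPWS := D -> PWS.
Definition DBP := (DPWS * DPWS)%type.

Definition sv (I : Str) : structure S D := proj1_sig I.

(* two-valued semantics: phi^{Q,I,a} = t iff sat2 Q I a phi *)
Fixpoint sat2 (Q : DPWS) (I : Str) (a : nat -> D) (phi : formula S) : Prop :=
  match phi with
  | Atom p args => pinterp (sv I) p (fun i => teval (sv I) a (args i))
  | Eq t1 t2 => teval (sv I) a t1 = teval (sv I) a t2
  | Neg p => ~ sat2 Q I a p
  | And p q => sat2 Q I a p /\ sat2 Q I a q
  | Forall x p => forall d, sat2 Q I (upd a x d) p
  | Know t p => Ag (teval (sv I) a t) /\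
                forall J, Q (teval (sv I) a t) J -> sat2 Q J a p
  end.

Inductive tv := TT | FF | UU.
Definition tinv (v : tv) : tv := match v with TT => FF | FF => TT | UU => UU end.
(* glb in the truth order f < u < t *)
Definition tand (v w : tv) : tv :=
  match v, w with
  | FF, _ => FF | _, FF => FF | TT, TT => TT | _, _ => UU end.

Definition decide (P : Prop) : bool :=
  if excluded_middle_informative P then true else false.

Definition glbOn {X : Type} (P : X -> Prop) (F : X -> tv) : tv :=
  if decide (forall x, P x -> F x = TT) then TT
  else if decide (exists x, P x /\ F x = FF) then FF else UU.

(* three-valued semantics w.r.t. a pair B = (B^c, B^l) of DPWSs *)
Fixpoint val (B : DBP) (I : Str) (a : nat -> D) (phi : formula S) : tv :=
  match phi with
  | Atom p args =>
      if decide (pinterp (sv I) p (fun i => teval (sv I) a (args i))) then TT else FF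
  | Eq t1 t2 => if decide (teval (sv I) a t1 = teval (sv I) a t2) then TT else FF
  | Neg p => tinv (val B I a p)
  | And p q => tand (val B I a p) (val B I a q)
  | Forall x p => glbOn (fun _ : D => True) (fun d => val B I (upd a x d) p)
  | Know t p =>
      let A := teval (sv I) a t in
      if decide (Ag A /\ forall J, fst B A J -> val B J a p = TT) then TT
      else if decide (~ Ag A \/ exists J, snd B A J /\ val B J a p = FF) then FF
      else UU
  end.

(* Sentences: values do not depend on the assignment; we fix the constant
   assignment to an element d0 of the (nonempty) domain. *)
Context (d0 : D).
Definition a0 : nat -> D := fun _ => d0.

Definition theory := formula S -> Prop.
Definition dtheory := D -> theory.

Definition tval (B : DBP) (I : Str) (Th : theory) : tv :=
  glbOn Th (fun phi => val B I a0 phi).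

Definition Dop (T : dtheory) (Q : DPWS) : DPWS :=
  fun A I => forall phi, T A phi -> sat2 Q I a0 phi.
Definition Dc (T : dtheory) (B : DBP) : DPWS := fun A I => tval B I (T A) <> FF.
Definition Dl (T : dtheory) (B : DBP) : DPWS := fun A I => tval B I (T A) = TT.

Definition leK (Q1 Q2 : DPWS) : Prop := forall A, Ag A -> forall I, Q2 A I -> Q1 A I.
Definition eqD (Q1 Q2 : DPWS) : Prop := forall A, Ag A -> forall I, Q1 A I <-> Q2 A I.
Definition lep (B B' : DBP) : Prop := leK (fst B) (fst B') /\ leK (snd B') (snd B).
Definition consistent (B : DBP) : Prop := leK (fst B) (snd B).

(* R = S_T(Q): the <=_K-least fixpoint of Q' |-> D^c_T((Q', Q)) *)
Definition stable_of (T : dtheory) (Q R : DPWS) : Prop :=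
  eqD R (Dc T (R, Q)) /\ (forall R', eqD R' (Dc T (R', Q)) -> leK R R').

Definition SupModel (T : dtheory) (Q : DPWS) : Prop := eqD Q (Dop T Q).
Definition KKfix (T : dtheory) (B : DBP) : Prop :=
  consistent B /\ eqD (fst B) (Dc T B) /\ eqD (snd B) (Dl T B).
Definition KKModel (T : dtheory) (B : DBP) : Prop :=
  KKfix T B /\ (forall B', KKfix T B' -> lep B B').
Definition PStModel (T : dtheory) (B : DBP) : Prop :=
  consistent B /\ stable_of T (snd B) (fst B) /\ stable_of T (fst B) (snd B).
Definition StModel (T : dtheory) (Q : DPWS) : Prop := PStModel T (Q, Q).
Definition WFModel (T : dtheory) (B : DBP) : Prop :=
  PStModel T B /\ (forall B', PStModel T B' -> lep B B').

Definition uc_dpws (Q : DPWS) : Prop := forall A, Ag A -> exists I, Q A I.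
Definition uc_dbp (B : DBP) : Prop := uc_dpws (snd B).

Inductive semantics := Sup | KK | PSt | St | WF.

Definition univ_consistent_under (T : dtheory) (sigma : semantics) : Prop :=
  match sigma with
  | Sup => forall Q, SupModel T Q -> uc_dpws Q
  | KK => forall B, KKModel T B -> uc_dbp B
  | PSt => forall B, PStModel T B -> uc_dbp B
  | St => forall Q, StModel T Q -> uc_dpws Q
  | WF => forall B, WFModel T B -> uc_dbp B
  end.

Fixpoint osat (I : Str) (a : nat -> D) (psi : oformula S) : Prop :=
  match psi with
  | OTop => True
  | OBot => False
  | OAtom p args => pinterp (sv I) p (fun i => teval (sv I) a (args i))
  | OEq t1 t2 => teval (sv I) a t1 = teval (sv I) a t2
  | ONeg q => ~ osat I a q
  | OAnd q1 q2 => osat I a q1 /\ osat I a q2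
  | OForall x q => forall d, osat I (upd a x d) q
  end.

(* permaconsistency: for every agent A and every way r of replacing (per
   sentence of T_A, per occurrence) the non-nested modal subformulas by t/f,
   the resulting theory has a model that is a structure (expands I_o). *)
Definition permaconsistent (T : dtheory) : Prop :=
  forall A, Ag A ->
  forall r : formula S -> oformula S,
    (forall phi, T A phi -> repl phi (r phi)) ->
    exists I : Str, forall phi, T A phi -> osat I a0 (r phi).

Definition agent_constants : Prop :=
  forall A, Ag A -> exists c : fsym S,
    farity S c = 0 /\ fobj S c = true /\ forall v, finterp Io c v = A.
Definition agent_predicate : Prop :=
  exists P : psym S, parity S P = 1 /\ pobj S P = true /\
    forall v, pinterp Io P v <-> (forall i, Ag (v i)).

End Semantics.

From Stdlib Require Import ClassicalEpsilon.

(* Replace every non-nested modal subformula K_t chi of a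
   sentence by the truth constant that makes the sentence hardest to satisfy:
   by f under an even number of negations and by t under an odd number.  This
   "pessimistic" replacement is one of the replacements quantified over in
   permaconsistency, so every agent A has a structure I satisfying the
   pessimistic version of all of T_A.  Since a pessimistic objective sentence
   implies the original sentence whatever the beliefs of the agents are
   (both in the two-valued and in the three-valued semantics), this I belongs
   to D_T(Q)_A and to D^l_T(B)_A (hence to D^c_T(B)_A) for every DPWS Q and
   every pair B.  Each kind of model is a fixpoint of one of these operators
   in the component that universal consistency looks at, so that component
   contains I and is nonempty. *)

(* [polar b phi] replaces each non-nested modal subformula of [phi] by f when
   it occurs with polarity [b] (true = positive) and by t otherwise. *)
Fixpoint polar {S : vocab} (b : bool) (phi : formula S) : oformula S :=
  match phi with
  | Atom p args => OAtom p args
  | Eq t1 t2 => OEq t1 t2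
  | Neg p => ONeg (polar (negb b) p)
  | And p q => OAnd (polar b p) (polar b q)
  | Forall x p => OForall x (polar b p)
  | Know _ _ => if b then OBot else OTop
  end.

Definition pessimistic {S : vocab} (phi : formula S) : oformula S := polar true phi.

Lemma polar_repl {S : vocab} (phi : formula S) (b : bool) : repl phi (polar b phi).
Proof.
  revert b; induction phi; intro b; simpl; try constructor; auto.
  destruct b; constructor.
Qed.

Lemma glbOn_TT {X : Type} (P : X -> Prop) (F : X -> tv) :
  (forall x, P x -> F x = TT) -> glbOn P F = TT.
Proof. intro H. unfold glbOn, decide. destruct excluded_middle_informative; tauto. Qed.

Lemma glbOn_not_FF {X : Type} (P : X -> Prop) (F : X -> tv) :
  glbOn P F <> FF -> forall x, P x -> F x <> FF.
Proof.
  intros H x Px Hx. apply H. unfold glbOn, decide.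
  destruct excluded_middle_informative as [Hall | _].
  - rewrite (Hall x Px) in Hx; discriminate.
  - destruct excluded_middle_informative as [_ | Hno]; [reflexivity |].
    exfalso; apply Hno; eauto.
Qed.

Section Soundness.
Context (S : vocab) (D : Type) (Io : structure S D) (Ag : D -> Prop).

(* Both halves are needed because negation swaps them. *)
Lemma val_polar (B : DBP Io) (I : Str Io) (phi : formula S) (a : nat -> D) :
  (osat I a (polar true phi) -> val Ag B I a phi = TT) /\
  (val Ag B I a phi <> FF -> osat I a (polar false phi)).
Proof.
  revert a; induction phi as [p args | t1 t2 | phi IH | phi1 IH1 phi2 IH2
                               | x phi IH | t phi _]; intro a; simpl.
  - unfold decide; destruct excluded_middle_informative; split; auto; congruence.
  - unfold decide; destruct excluded_middle_informative; split; auto; congruence.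
  - destruct (IH a) as [Hpess Hopt]. split.
    + intro Hn. destruct (val Ag B I a phi) eqn:E; simpl; auto;
        exfalso; apply Hn, Hopt; congruence.
    + intros Hn Hs. rewrite (Hpess Hs) in Hn. simpl in Hn. congruence.
  - destruct (IH1 a) as [Hpess1 Hopt1], (IH2 a) as [Hpess2 Hopt2]. split.
    + intros [H1 H2]. rewrite Hpess1, Hpess2; auto.
    + intro Hn. split; [apply Hopt1 | apply Hopt2]; intro E; rewrite E in Hn.
      * simpl in Hn; congruence.
      * destruct (val Ag B I a phi1); simpl in Hn; congruence.
  - split.
    + intro H. apply glbOn_TT. intros d _. apply (IH _), H.
    + intros Hn d. apply (IH _). exact (glbOn_not_FF _ _ Hn d Logic.I).
  - split; [intros [] | auto].
Qed.

Lemma sat2_polar (Q : DPWS Io) (I : Str Io) (phi : formula S) (a : nat -> D) :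
  (osat I a (polar true phi) -> sat2 Ag Q I a phi) /\
  (sat2 Ag Q I a phi -> osat I a (polar false phi)).
Proof.
  revert a; induction phi as [p args | t1 t2 | phi IH | phi1 IH1 phi2 IH2
                               | x phi IH | t phi _]; intro a; simpl; try tauto.
  - destruct (IH a) as [Hpess Hopt]. split; intros H H'; apply H.
    + apply Hopt, H'.
    + apply Hpess, H'.
  - destruct (IH1 a), (IH2 a); tauto.
  - split; intros H d; apply (IH _), H.
Qed.

End Soundness.

Section Models.
Context {S : vocab} {D : Type} {d0 : D} {Io : structure S D} {Ag : D -> Prop}
        {T : D -> formula S -> Prop}.

Definition robust (A : D) (I : Str Io) : Prop :=
  forall phi, T A phi -> osat I (a0 d0) (pessimistic phi).

Lemma robust_exists :
  permaconsistent Io Ag d0 T -> forall A, Ag A -> exists I, robust A I.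
Proof.
  intros Hperm A HA. apply (Hperm A HA pessimistic).
  intros phi _. apply polar_repl.
Qed.

Lemma robust_in_Dop (A : D) (I : Str Io) (Q : DPWS Io) :
  robust A I -> Dop Ag d0 T Q A I.
Proof. intros HI phi Hphi. apply (sat2_polar _ _ _ Ag Q I phi), HI, Hphi. Qed.

Lemma robust_in_Dl (A : D) (I : Str Io) (B : DBP Io) :
  robust A I -> Dl Ag d0 T B A I.
Proof.
  intros HI. apply glbOn_TT. intros phi Hphi.
  apply (val_polar _ _ _ Ag B I phi), HI, Hphi.
Qed.

Lemma Dl_in_Dc (B : DBP Io) (A : D) (I : Str Io) :
  Dl Ag d0 T B A I -> Dc Ag d0 T B A I.
Proof. unfold Dl, Dc. intros ->. discriminate. Qed.

Hypothesis Hperm : permaconsistent Io Ag d0 T.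

Lemma Sup_uc (Q : DPWS Io) : SupModel Ag d0 T Q -> uc_dpws Ag Q.
Proof.
  intros HQ A HA. destruct (robust_exists Hperm A HA) as [I HI].
  exists I. apply (HQ A HA I), robust_in_Dop, HI.
Qed.

(* Every KK-model is universally consistent: its second component is a
   fixpoint of D^l_T. *)
Lemma KK_uc (B : DBP Io) : KKModel Ag d0 T B -> uc_dbp Ag B.
Proof.
  intros [[_ [_ Hl]] _] A HA. destruct (robust_exists Hperm A HA) as [I HI].
  exists I. apply (Hl A HA I), robust_in_Dl, HI.
Qed.

(* Every PSt-model is universally consistent: B^l = S_T(B^c) is a fixpoint of
   Q' |-> D^c_T((Q', B^c)). *)
Lemma PSt_uc (B : DBP Io) : PStModel Ag d0 T B -> uc_dbp Ag B.
Proof.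
  intros [_ [_ [Hstable _]]] A HA. destruct (robust_exists Hperm A HA) as [I HI].
  exists I. apply (Hstable A HA I), Dl_in_Dc, robust_in_Dl, HI.
Qed.

End Models.

Theorem mainTheorem4 (S : vocab) (D : Type) (d0 : D) (Io : structure S D)
  (Ag : D -> Prop)
  (Hconst : agent_constants Io Ag) (Hapred : agent_predicate Io Ag)
  (T : D -> formula S -> Prop)
  (Hsent : forall A, Ag A -> forall phi, T A phi -> sentence phi)
  (Hperm : permaconsistent Io Ag d0 T)
  (sigma : semantics) :
  univ_consistent_under Io Ag d0 T sigma.
Proof.
  destruct sigma; simpl.
  - exact (Sup_uc Hperm).
  - exact (KK_uc Hperm).
  - exact (PSt_uc Hperm).
  -
    intros Q HQ. exact (PSt_uc Hperm (Q, Q) HQ).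
  -
    intros B [HB _]. exact (PSt_uc Hperm B HB).
Qed.
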